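(* Let $k$ be a field of characteristic $\neq2$, $f\in k[X]$ separable of degree $6$ with set of roots $\Omega\subset\bar k$, $l=k(\Omega)$, $A=k[X]/(f)$, $\delta\in A^*$, and $\delta_\omega=\varphi_\omega(\delta)$ for $\omega\in\Omega$, where $\varphi_\omega$ is evaluation at $X=\omega$. Fix square roots $\sqrt{\delta_\omega}\in\bar k$ and let $m=l(\{\sqrt{\delta_\omega}\sqrt{\delta_\psi}:\omega,\psi\in\Omega\})$. Then $k([\Lambda])=m$.
   Context: $\Lambda$ is the set of $32$ lines $L_\varepsilon\subset\mathbb{P}(A\otimes\bar k)$, for $\varepsilon\in A\otimes\bar k$ with $\varepsilon^2=\delta$, where $L_\varepsilon$ corresponds to the subspace $\{\varepsilon^{-1}(sX+t):s,t\in\bar k\}$. These lines lie on $V_{f,\delta}=\{[q]:\delta q^2\in\mathrm{span}(1,X,X^2)\}$. $G(\bar k/k)$ acts on them. For an object or set $Y$ acted on by $G(\bar k/k)$, the field of definition $k(Y)$ is the smallest subfield $k'\subseteq\bar k$ containing $k$ such that every $\sigma\in G(\bar k/k')$ fixes $Y$. $k([\Lambda])$ denotes the field of definition of the sequence of all lines in $\Lambda$, i.e., the smallest such field over which every line of $\Lambda$ is individually fixed. *)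

From HB Require Import structures.
From mathcomp Require Import all_boot all_order all_algebra all_field.
Set Implicit Arguments. Unset Strict Implicit. Unset Printing Implicit Defensive.
Import GRing.Theory.
Local Open Scope ring_scope.

Section Defs.
Variables (k : fieldType) (L : closedFieldType) (iota : {rmorphism k -> L}).

Definition is_subfield (K : L -> Prop) : Prop :=
  [/\ K 1, (forall x y, K x -> K y -> K (x - y)),
      (forall x y, K x -> K y -> K (x * y)) & (forall x, K x -> K x^-1)].

Definition over_k (K : L -> Prop) : Prop := is_subfield K /\ forall a, K (iota a).

Definition gen_field (S : L -> Prop) : L -> Prop :=
  fun x => forall K, over_k K -> (forall y, S y -> K y) -> K x.

(* The line L_eps in P(A (x) L), A (x) L = L[X]/(fL), represented by the
   2-dimensional subspace { eps^-1 (s X + t) } of reduced representatives: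
   q lies in it iff eps * q = s X + t in L[X]/(fL). *)
Definition line_of (fL eps : {poly L}) : {poly L} -> Prop :=
  fun q => (size q < size fL)%N /\
           exists s t : L, fL %| eps * q - (s *: 'X + t%:P).

Definition fixes_line (s : {rmorphism L -> L}) (V : {poly L} -> Prop) : Prop :=
  forall q, V q <-> V (map_poly s q).

Definition lines_fixed_over (f delta : {poly k}) (K : L -> Prop) : Prop :=
  forall s : {rmorphism L -> L}, bijective s -> (forall x, K x -> s x = x) ->
  forall eps : {poly L},
    map_poly iota f %| eps * eps - map_poly iota delta ->
    fixes_line s (line_of (map_poly iota f) eps).

End Defs.

From HB Require Import structures.
From mathcomp Require Import all_boot all_order all_algebra all_field.
From mathcomp Require Import boolp classical_sets.
From mathcomp Require Import ring zify.
Set Implicit Arguments. Unset Strict Implicit. Unset Printing Implicit Defensive.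
Import GRing.Theory.
Local Open Scope ring_scope.

(* Let eps be a square root of delta in A (x) L and s an automorphism of L
   over k, acting on coefficients.  Because f has at least three roots, s fixes
   the line L_eps exactly when s(eps) = c eps mod f with c = +-1: if s fixes
   L_eps, then s(eps^-1) lies on L_eps, i.e. it is (aX + b)/eps, and
   (aw + b)^2 = 1 at every root w forces a = 0.  At the roots this reads
   s(eps(w)) = c eps(s w).  An s fixing m fixes the roots and all products
   eps(w) eps(w0) = +-sqrt(delta_w) sqrt(delta_w0), so it fixes every line.
   Conversely, if s fixes all lines, comparing eps with the square root
   obtained by flipping its sign at one root u shows s u = u; then
   s(sqrt(delta_w)) = c sqrt(delta_w) for a single c, and s fixes every
   generator of m.  Hence the generators lie in any K over whose automorphisms
   all lines are fixed, since an element of L separable over K and fixed by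
   Aut(L/K) lies in K; this rests on extending embeddings of subfields of L to
   automorphisms of L by Zorn's lemma. *)

Definition sub_rel (T : Type) (R S : T -> T -> Prop) := forall a b, R a b -> S a b.

Section PartialEmbedding.
Variable L : fieldType.

(* A field embedding of a subfield of L into L, recorded by its graph so that
   the union of a chain of such embeddings is again one (Zorn's lemma). *)
Record pemb := PEmb {
  pemb_rel :> L -> L -> Prop;
  pemb_functional : forall a b b', pemb_rel a b -> pemb_rel a b' -> b = b';
  pemb_sub : forall a b a' b', pemb_rel a b -> pemb_rel a' b' ->
    pemb_rel (a - a') (b - b');
  pemb_mul : forall a b a' b', pemb_rel a b -> pemb_rel a' b' ->
    pemb_rel (a * a') (b * b');
  pemb_one : pemb_rel 1 1;
  pemb_inv : forall a b, pemb_rel a b -> exists c, pemb_rel a^-1 c }.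

Definition pemb_dom (G : pemb) : {pred L} := fun a => `[< exists b, G a b >].

Lemma pemb_domP (G : pemb) a : reflect (exists b, G a b) (a \in pemb_dom G).
Proof. exact: asboolP. Qed.

Lemma pemb_dom_divring_closed (G : pemb) : GRing.divring_closed (pemb_dom G).
Proof.
split; first by apply/pemb_domP; exists 1; apply: pemb_one.
- move=> x y /pemb_domP[b Gxb] /pemb_domP[c Gyc].
  by apply/pemb_domP; exists (b - c); apply: pemb_sub.
- move=> x y /pemb_domP[b Gxb] /pemb_domP[c Gyc]; apply/pemb_domP.
  have [c' Gyc'] := pemb_inv Gyc; exists (b * c'); exact: pemb_mul.
Qed.

HB.instance Definition _ (G : pemb) :=
  GRing.isDivringClosed.Build L (pemb_dom G) (pemb_dom_divring_closed G).

Inductive dom (G : pemb) := Dom x of x \in pemb_dom G.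
Definition dom_val G (u : dom G) := let: Dom x _ := u in x.
HB.instance Definition _ G := [isSub for (@dom_val G)].
HB.instance Definition _ G := [Choice of dom G by <:].
HB.instance Definition _ G := [SubChoice_isSubUnitRing of dom G by <:].
HB.instance Definition _ G := [SubNzRing_isSubComNzRing of dom G by <:].
HB.instance Definition _ G := [SubComUnitRing_isSubIntegralDomain of dom G by <:].
HB.instance Definition _ G := [SubIntegralDomain_isSubField of dom G by <:].

Definition pemb_map (G : pemb) (u : dom G) : L :=
  projT1 (cid (pemb_domP _ _ (valP u))).

Lemma pemb_mapP G (u : dom G) : G (val u) (pemb_map u).
Proof. exact: projT2 (cid (pemb_domP _ _ (valP u))). Qed.

Lemma pemb_map_eq G (u : dom G) b : G (val u) b -> pemb_map u = b.
Proof. exact: pemb_functional (pemb_mapP u). Qed.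

Lemma pemb_map_is_zmod_morphism G : zmod_morphism (@pemb_map G).
Proof. by move=> u v; apply: pemb_map_eq; apply: pemb_sub; apply: pemb_mapP. Qed.

Lemma pemb_map_is_monoid_morphism G : monoid_morphism (@pemb_map G).
Proof.
split; first exact/pemb_map_eq/pemb_one.
by move=> u v; apply: pemb_map_eq; apply: pemb_mul; apply: pemb_mapP.
Qed.

HB.instance Definition _ G := GRing.isZmodMorphism.Build _ _ (@pemb_map G)
  (@pemb_map_is_zmod_morphism G).
HB.instance Definition _ G := GRing.isMonoidMorphism.Build _ _ (@pemb_map G)
  (@pemb_map_is_monoid_morphism G).

End PartialEmbedding.

Section QuotientEmbedding.
Variables (L : fieldType) (R : comNzRingType) (ev ps : {rmorphism R -> L}).
Hypothesis same_kernel : forall g, (ev g == 0) = (ps g == 0).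

Definition quotient_rel a b :=
  exists g h, [/\ ev h != 0, a = ev g / ev h & b = ps g / ps h].

Let ps_neq0 h : ev h != 0 -> ps h != 0. Proof. by rewrite same_kernel. Qed.

Lemma quotient_rel_functional a b b' :
  quotient_rel a b -> quotient_rel a b' -> b = b'.
Proof.
move=> [g [h [h0 -> ->]]] [g' [h' [h'0 Ea ->]]].
have /eqP : ev (g * h' - g' * h) = 0.
  by rewrite rmorphB !rmorphM; apply/eqP; rewrite subr_eq0 -eqr_div // Ea.
rewrite same_kernel rmorphB !rmorphM subr_eq0 -eqr_div ?ps_neq0 //.
by move/eqP.
Qed.

Lemma quotient_rel_sub a b a' b' :
  quotient_rel a b -> quotient_rel a' b' -> quotient_rel (a - a') (b - b').
Proof.
move=> [g [h [h0 -> ->]]] [g' [h' [h'0 -> ->]]].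
have [ph0 ph'0] := (ps_neq0 h0, ps_neq0 h'0).
exists (g * h' - g' * h), (h * h'); rewrite !(rmorphB, rmorphM) mulf_neq0 //.
by split=> //; field; apply/andP.
Qed.

Lemma quotient_rel_mul a b a' b' :
  quotient_rel a b -> quotient_rel a' b' -> quotient_rel (a * a') (b * b').
Proof.
move=> [g [h [h0 -> ->]]] [g' [h' [h'0 -> ->]]].
have [ph0 ph'0] := (ps_neq0 h0, ps_neq0 h'0).
exists (g * g'), (h * h'); rewrite !rmorphM mulf_neq0 //.
by split=> //; field; apply/andP.
Qed.

Lemma quotient_rel_one : quotient_rel 1 1.
Proof. by exists 1, 1; split; rewrite ?rmorph1 ?divr1 ?oner_neq0. Qed.

Lemma quotient_rel_inv a b : quotient_rel a b -> exists c, quotient_rel a^-1 c.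
Proof.
move=> [g [h [h0 -> _]]]; have [g0|g0] := eqVneq (ev g) 0.
  by exists 0, 0, 1; rewrite g0 !rmorph0 rmorph1 !mul0r invr0 oner_neq0.
by exists (ps h / ps g), h, g; rewrite invf_div.
Qed.

Definition quotient_pemb : pemb L := PEmb quotient_rel_functional
  quotient_rel_sub quotient_rel_mul quotient_rel_one quotient_rel_inv.

Lemma quotient_pemb_rel g : quotient_pemb (ev g) (ps g).
Proof. by exists g, 1; split; rewrite ?rmorph1 ?divr1 ?oner_neq0. Qed.

End QuotientEmbedding.

Section MinimalPolynomial.
Variables (D L : fieldType) (io : {rmorphism D -> L}) (z : L).

Definition minpoly_of (p : {poly D}) :=
  p != 0 /\ forall g, root (map_poly io g) z = (p %| g).

Lemma exists_minpoly g : g != 0 -> root (map_poly io g) z ->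
  exists p, minpoly_of p.
Proof.
move=> g0 gz; pose P n := `[< exists2 g, g != 0 & root (map_poly io g) z &&
  (size g == n)%N >].
have [|n /asboolP[p p0 /andP[pz /eqP sp]] n_min] := ex_minnP (P := P).
  by exists (size g); apply/asboolP; exists g; rewrite ?gz /=.
exists p; split=> // h; apply/idP/idP => [hz|/dvdpP[q ->]]; last first.
  by rewrite rmorphM rootM pz orbT.
apply/modp_eq0P; apply/eqP; apply/negPn/negP => r0.
have /n_min : P (size (h %% p)).
  apply/asboolP; exists (h %% p) => //; rewrite eqxx andbT.
  rewrite map_modp /root; apply/eqP; move: (eqP hz).
  by rewrite {1}(divp_eq (map_poly io h) (map_poly io p)) hornerD hornerM
    (eqP pz) mulr0 add0r.
by rewrite -sp leqNgt ltn_modp p0.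
Qed.

Lemma minpoly_coprime p g : minpoly_of p -> ~~ (p %| g) -> coprimep p g.
Proof.
move=> [p0 pE] npg; set d := gcdp p g.
have d0 : d != 0 by rewrite gcdp_eq0 negb_and p0.
have ped : p %/ d * d = p := divpK (dvdp_gcdl p g).
set e := p %/ d in ped; have e0 : e != 0.
  by apply: contraNneq p0 => e0; rewrite -ped e0 mul0r.
have : root (map_poly io (e * d)) z by rewrite ped pE dvdpp.
rewrite rmorphM rootM !pE => /orP[pe|pd]; last first.
  by rewrite (dvdp_trans pd (dvdp_gcdr p g)) in npg.
have := dvdp_leq e0 pe; rewrite -{1}ped size_mul // /coprimep -/d.
have := size_poly_gt0 d; rewrite d0; lia.
Qed.

Lemma minpoly_root_transfer (phi : {rmorphism D -> L}) w p :
  minpoly_of p -> root (map_poly phi p) w ->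
  forall g, root (map_poly io g) z = root (map_poly phi g) w.
Proof.
move=> pmin pw g; have [p0 pE] := pmin; rewrite pE.
apply/idP/idP => [/dvdpP[q ->]|gw]; first by rewrite rmorphM rootM pw orbT.
apply/negPn/negP => /(minpoly_coprime pmin)/Bezout_coprimepP[[u v]] /=.
move=> /eqpf_eq[c c0] /(congr1 (fun q => (map_poly phi q).[w])) /=.
rewrite !(rmorphD, rmorphM) /= hornerD !hornerM (eqP pw) (eqP gw) !mulr0.
rewrite addr0 linearZ /= rmorph1 hornerZ hornerC mulr1 => /esym/eqP.
by rewrite fmorph_eq0 (negbTE c0).
Qed.

End MinimalPolynomial.

Lemma minpoly_other_root (D : fieldType) (L : closedFieldType)
    (io : {rmorphism D -> L}) x p :
  minpoly_of io x p -> separable_poly (map_poly io p) -> (forall u, io u != x) ->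
  exists2 y, y != x & root (map_poly io p) y.
Proof.
move=> [p0 pE]; set r := map_poly io p => r_sep x_notin.
have [r1 rE] : exists r1, r = r1 * ('X - x%:P) by apply/factor_theorem; rewrite pE.
have r1x : ~~ root r1 x by move: r_sep; rewrite rE separable_root => /andP[].
have [r1_1|/closed_rootP[y r1y]] := eqVneq (size r1) 1; last first.
  by exists y; [apply: contraNneq r1x => <- | rewrite rE rootM r1y].
have [|u pu] := poly2_root (p := p).
  rewrite -(size_map_poly io) -/r rE size_mul ?polyXsubC_eq0 ?size_XsubC ?r1_1 //.
  by rewrite -size_poly_eq0 r1_1.
have : root r (io u) by rewrite /r /root horner_map (eqP pu) rmorph0.
rewrite rE rootM root_XsubC (negbTE (x_notin u)) orbF.
by move/eqP/size_poly1P: r1_1 => [c c0 ->]; rewrite rootC (negbTE c0).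
Qed.

Lemma pemb_adjoin (L : fieldType) (G : pemb L) z w (p : {poly dom G}) :
  minpoly_of val z p -> root (map_poly (@pemb_map _ G) p) w ->
  exists2 G' : pemb L, sub_rel G G' & G' z w.
Proof.
move=> pmin pw.
have same_kernel (g : {poly dom G}) :
    ((horner_eval z \o map_poly val) g == 0) =
    ((horner_eval w \o map_poly (@pemb_map _ G)) g == 0).
  exact: minpoly_root_transfer pmin pw g.
exists (quotient_pemb same_kernel) => [a b Gab|].
  have Ga : a \in pemb_dom G by apply/pemb_domP; exists b.
  have := quotient_pemb_rel same_kernel (Dom Ga)%:P.
  rewrite /= !horner_evalE (map_polyC val) map_polyC !hornerC.
  by rewrite -(pemb_map_eq (u := Dom Ga) Gab).
have := quotient_pemb_rel same_kernel 'X.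
by rewrite /= !horner_evalE (map_polyX val) map_polyX !hornerX.
Qed.

Lemma poly_over_pemb_dom (L : fieldType) (G : pemb L) (q : {poly L}) :
  (forall i, q`_i \in pemb_dom G) -> exists q' : {poly dom G}, map_poly val q' = q.
Proof.
move=> Gq; exists (\poly_(i < size q) Dom (Gq i)); apply/polyP => i.
by rewrite coef_map coef_poly /=; case: ltnP => // /(nth_default 0) ->.
Qed.

Section TotalEmbedding.
Variables (L : fieldType) (M : pemb L) (M_total : forall a, a \in pemb_dom M).

Definition total_map (a : L) : L := pemb_map (Dom (M_total a)).

Lemma total_map_eq a b : M a b -> total_map a = b.
Proof. exact: (pemb_map_eq (u := Dom (M_total a))). Qed.

Lemma total_mapP a : M a (total_map a).
Proof. exact: (pemb_mapP (Dom (M_total a))). Qed.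

Lemma total_map_is_zmod_morphism : zmod_morphism total_map.
Proof. by move=> a b; apply: total_map_eq; apply: pemb_sub; apply: total_mapP. Qed.

Lemma total_map_is_monoid_morphism : monoid_morphism total_map.
Proof.
split; first exact/total_map_eq/pemb_one.
by move=> a b; apply: total_map_eq; apply: pemb_mul; apply: total_mapP.
Qed.

HB.instance Definition _ := GRing.isZmodMorphism.Build _ _ total_map
  total_map_is_zmod_morphism.
HB.instance Definition _ := GRing.isMonoidMorphism.Build _ _ total_map
  total_map_is_monoid_morphism.

End TotalEmbedding.

Section DirectedUnion.
Variables (L : fieldType) (U : L -> L -> Prop).
Hypothesis U_directed : forall a b a' b', U a b -> U a' b' ->
  exists2 G : pemb L, sub_rel G U & G a b /\ G a' b'.
Hypothesis U1 : U 1 1.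

Lemma directed_functional a b b' : U a b -> U a b' -> b = b'.
Proof.
move=> Uab Uab'; have [G _ [Gab Gab']] := U_directed Uab Uab'.
exact: pemb_functional Gab Gab'.
Qed.

Lemma directed_sub a b a' b' : U a b -> U a' b' -> U (a - a') (b - b').
Proof.
move=> Uab Uab'; have [G GU [Gab Gab']] := U_directed Uab Uab'.
exact/GU/pemb_sub.
Qed.

Lemma directed_mul a b a' b' : U a b -> U a' b' -> U (a * a') (b * b').
Proof.
move=> Uab Uab'; have [G GU [Gab Gab']] := U_directed Uab Uab'.
exact/GU/pemb_mul.
Qed.

Lemma directed_inv a b : U a b -> exists c, U a^-1 c.
Proof.
move=> Uab; have [G GU [Gab _]] := U_directed Uab Uab.
by have [c Gc] := pemb_inv Gab; exists c; apply: GU.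
Qed.

Definition directed_pemb : pemb L :=
  PEmb directed_functional directed_sub directed_mul U1 directed_inv.

End DirectedUnion.

Lemma pemb_chain_union (L : fieldType) (G0 : pemb L) (F : set (set (L * L))) :
  (forall X, F X -> exists G : pemb L, forall a b, G a b <-> X (a, b) \/ G0 a b) ->
  total_on F subset ->
  exists G : pemb L,
    forall a b, G a b <-> (\bigcup_(X in F) X)%classic (a, b) \/ G0 a b.
Proof.
move=> Fext Ftot; pose U a b := (\bigcup_(X in F) X)%classic (a, b) \/ G0 a b.
have inF X : F X -> exists G : pemb L,
    [/\ sub_rel G U, forall a b, X (a, b) -> G a b & sub_rel G0 G].
  move=> FX; have [G GX] := Fext X FX; exists G; split.
  - by move=> x y /GX[Xxy|G0xy]; [left; exists X|right].
  - by move=> x y Xxy; apply/GX; left.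
  - by move=> x y G0xy; apply/GX; right.
have U_directed a b a' b' : U a b -> U a' b' ->
    exists2 G : pemb L, sub_rel G U & G a b /\ G a' b'.
  case=> [[X FX Xab]|G0ab] [[X' FX' Xab']|G0ab'].
  - have [XX'|X'X] := Ftot X X' FX FX'.
      have [G [GU XG _]] := inF X' FX'.
      by exists G => //; split; apply: XG => //; apply: XX'.
    have [G [GU XG _]] := inF X FX.
    by exists G => //; split; apply: XG => //; apply: X'X.
  - have [G [GU XG G0G]] := inF X FX.
    by exists G => //; split; [apply: XG | apply: G0G].
  - have [G [GU XG G0G]] := inF X' FX'.
    by exists G => //; split; [apply: G0G | apply: XG].
  - by exists G0 => // x y; right.
by exists (directed_pemb U_directed (or_intror (pemb_one G0))) => a b.
Qed.

Section IdentityEmbedding.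
Variables (L : closedFieldType) (K : L -> Prop) (K_sub : is_subfield K).

Definition id_rel (a b : L) := K a /\ b = a.

Lemma id_rel_functional a b b' : id_rel a b -> id_rel a b' -> b = b'.
Proof. by move=> [_ ->] [_ ->]. Qed.

Lemma id_rel_sub a b a' b' : id_rel a b -> id_rel a' b' -> id_rel (a - a') (b - b').
Proof. by case: K_sub => _ KB _ _ [Ka ->] [Ka' ->]; split=> //; apply: KB. Qed.

Lemma id_rel_mul a b a' b' : id_rel a b -> id_rel a' b' -> id_rel (a * a') (b * b').
Proof. by case: K_sub => _ _ KM _ [Ka ->] [Ka' ->]; split=> //; apply: KM. Qed.

Lemma id_rel_one : id_rel 1 1.
Proof. by case: K_sub. Qed.

Lemma id_rel_inv a b : id_rel a b -> exists c, id_rel a^-1 c.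
Proof. by case: K_sub => _ _ _ KV [Ka _]; exists a^-1; split=> //; apply: KV. Qed.

Definition id_pemb : pemb L :=
  PEmb id_rel_functional id_rel_sub id_rel_mul id_rel_one id_rel_inv.

Lemma id_pemb_dom (u : dom id_pemb) : K (val u).
Proof. by have /pemb_domP[b []] := valP u. Qed.

Lemma id_pemb_map (u : dom id_pemb) : pemb_map u = val u.
Proof. by apply: pemb_map_eq; split; [apply: id_pemb_dom|]. Qed.

End IdentityEmbedding.

Section SubfieldPred.
Variables (L : closedFieldType) (K : L -> Prop).

Definition subfield_pred of is_subfield K : {pred L} := fun x => `[< K x >].

Lemma subfield_predP (K_sub : is_subfield K) x :
  reflect (K x) (x \in subfield_pred K_sub).
Proof. exact: asboolP. Qed.

Lemma subfield_pred_divring_closed (K_sub : is_subfield K) :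
  GRing.divring_closed (subfield_pred K_sub).
Proof.
have [K1 KB KM KV] := K_sub; split; first exact/subfield_predP.
  by move=> x y /subfield_predP Kx /subfield_predP Ky; apply/subfield_predP/KB.
by move=> x y /subfield_predP Kx /subfield_predP Ky; apply/subfield_predP/KM/KV.
Qed.

HB.instance Definition _ (K_sub : is_subfield K) :=
  GRing.isDivringClosed.Build L (subfield_pred K_sub)
    (subfield_pred_divring_closed K_sub).

End SubfieldPred.

Section AutomorphismExtension.
Variables (k : fieldType) (L : closedFieldType) (iota : {rmorphism k -> L}).
Hypothesis L_alg :
  forall x : L, exists2 p : {poly k}, p != 0 & root (map_poly iota p) x.

Definition fixes_k (G : pemb L) := forall a, G (iota a) (iota a).

Lemma pemb_extend_point (G : pemb L) z :
  fixes_k G -> exists2 G' : pemb L, sub_rel G G' & z \in pemb_dom G'.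
Proof.
move=> Gk; have [P P0 Pz] := L_alg z.
have [|g Pg] := @poly_over_pemb_dom _ G (map_poly iota P).
  by move=> i; rewrite coef_map; apply/pemb_domP; exists (iota P`_i); apply: Gk.
have g0 : g != 0 by rewrite -(map_poly_eq0 val) Pg map_poly_eq0.
have [p pmin] := exists_minpoly g0 (etrans (congr1 (root^~ z) Pg) Pz).
have [p0 pE] := pmin; have pz : root (map_poly val p) z by rewrite pE.
have /closed_rootP[w pw] : size (map_poly (@pemb_map _ G) p) != 1.
  rewrite size_map_poly; apply: contraTneq pz => /eqP/size_poly1P[c c0 ->].
  by rewrite map_polyC rootC fmorph_eq0.
have [G' GG' G'zw] := pemb_adjoin pmin pw.
by exists G' => //; apply/pemb_domP; exists w.
Qed.

(* Zorn's lemma on the graphs extending G0: a maximal one is total, since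
   [pemb_extend_point] would otherwise enlarge it. *)
Lemma pemb_extend_total (G0 : pemb L) :
  fixes_k G0 -> exists2 M : pemb L, sub_rel G0 M & forall a, a \in pemb_dom M.
Proof.
move=> G0k.
pose extends (A : set (L * L)) :=
  exists G : pemb L, forall a b, G a b <-> A (a, b) \/ G0 a b.
have [A [[M MA] A_max]] := Zorn_bigcup (P := extends) (@pemb_chain_union _ G0).
have G0M : sub_rel G0 M by move=> a b G0ab; apply/MA; right.
exists M => // z; apply/pemb_domP; apply: contrapT => Mz.
have [G' MG' /pemb_domP[w G'zw]] := pemb_extend_point z (fun a => G0M _ _ (G0k a)).
apply: (A_max (fun p => G' p.1 p.2)).
  split=> [[a b] Aab|AG']; first by apply/MG'/MA; left.
  by apply/Mz; exists w; apply/MA; left; exact: (AG' (z, w)).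
by exists G' => a b; split=> [|[//|/G0M/MG' //]]; left.
Qed.

Lemma fixes_k_rmorph_bijective (s : {rmorphism L -> L}) :
  (forall a, s (iota a) = iota a) -> bijective s.
Proof.
move=> s_k; have s_inj := fmorph_inj s.
suff s_surj y : exists x, s x = y.
  exists (fun y => projT1 (cid (s_surj y))) => [x|y]; last by case: cid.
  by apply: s_inj; case: cid.
have [P P0 Py] := L_alg y; set q := map_poly iota P in Py.
have [rs q_rs] := closed_field_poly_normal q.
have rootq x : root q x = (x \in undup rs).
  by rewrite mem_undup q_rs rootZ ?lead_coef_eq0 ?map_poly_eq0 ?root_prod_XsubC.
have sq : map_poly s q = q.
  by rewrite -map_poly_comp; apply: eq_map_poly => a /=; rewrite s_k.
have s_rs : {subset map s (undup rs) <= undup rs}.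
  move=> sx /mapP[x]; rewrite -rootq => qx ->; rewrite -rootq.
  by rewrite /root -sq horner_map (eqP qx) rmorph0.
have s_uniq : uniq (map s (undup rs)) by rewrite map_inj_uniq ?undup_uniq.
have [|_ s_rsE] := uniq_min_size s_uniq s_rs; first by rewrite size_map.
by move: Py; rewrite rootq -s_rsE => /mapP[x _ ->]; exists x.
Qed.

Lemma pemb_extend_aut (G0 : pemb L) : fixes_k G0 ->
  exists2 s : {rmorphism L -> L}, bijective s & forall a b, G0 a b -> s a = b.
Proof.
move=> G0k; have [M G0M M_total] := pemb_extend_total G0k.
exists (total_map M_total); last by move=> a b /G0M; apply: total_map_eq.
by apply: fixes_k_rmorph_bijective => a; apply: total_map_eq; apply/G0M/G0k.
Qed.

Lemma aut_fixed_mem (K : L -> Prop) x (q : {poly L}) : over_k iota K ->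
  q != 0 -> (forall i, K q`_i) -> separable_poly q -> root q x ->
  (forall s : {rmorphism L -> L}, bijective s -> (forall y, K y -> s y = y) ->
     s x = x) ->
  K x.
Proof.
move=> [K_sub Kk] q0 Kq q_sep qx x_fixed; apply: contrapT => Kx.
pose G := id_pemb K_sub.
have [|q' q'E] := @poly_over_pemb_dom _ G q.
  by move=> i; apply/pemb_domP; exists q`_i.
have q'0 : q' != 0 by rewrite -(map_poly_eq0 val) q'E.
have [p pmin] := exists_minpoly q'0 (etrans (congr1 (root^~ x) q'E) qx).
have r_sep : separable_poly (map_poly val p).
  rewrite separable_map (dvdp_separable (p := q')) -?pmin.2 ?q'E //.
  by rewrite -(separable_map val) q'E.
have [|y yx py] := minpoly_other_root pmin r_sep.
  by move=> u; apply/eqP => ux; apply: Kx; rewrite -ux; apply: id_pemb_dom.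
rewrite -(eq_map_poly (@id_pemb_map _ _ K_sub)) in py.
have [G' GG' G'xy] := pemb_adjoin pmin py.
have [|s s_bij sG'] := pemb_extend_aut (G0 := G').
  by move=> a; apply: GG'; split.
have s_K z : K z -> s z = z by move=> Kz; apply/sG'/GG'.
by move: yx; rewrite -(sG' _ _ G'xy) (x_fixed s s_bij s_K) eqxx.
Qed.

End AutomorphismExtension.

Lemma exists_interpolant (F : fieldType) (rs : seq F) (v : F -> F) :
  uniq rs -> exists e : {poly F}, {in rs, forall w, e.[w] = v w}.
Proof.
elim: rs => [|a rs IHrs] /=; first by exists 0.
case/andP => a_rs /IHrs[e eE]; pose P := \prod_(z <- rs) ('X - z%:P).
have Pa : P.[a] != 0 by rewrite -/(root P a) root_prod_XsubC.
exists (e + ((v a - e.[a]) / P.[a]) *: P) => w; rewrite inE => /predU1P[->|w_rs].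
  by rewrite hornerD hornerZ divfK // addrC subrK.
have /eqP Pw : root P w by rewrite root_prod_XsubC.
by rewrite hornerD hornerZ Pw mulr0 addr0 eE.
Qed.

Lemma affine_sqr_eq1 (F : fieldType) (rs : seq F) a b :
  uniq rs -> (3 <= size rs)%N -> {in rs, forall w, (a * w + b) ^+ 2 = 1} ->
  a = 0.
Proof.
move=> rs_uniq rs3 ab1; apply/eqP/contraT => a0.
have ab_inj : injective (fun w => a * w + b) by move=> x y /addIr/(mulfI a0).
have : {subset map (fun w => a * w + b) rs <= [:: 1; -1]}.
  by move=> _ /mapP[w /ab1/eqP + ->]; rewrite sqrf_eq1 !inE.
move/(uniq_leq_size _); rewrite map_inj_uniq // size_map => /(_ rs_uniq).
by move/(leq_trans rs3).
Qed.

Section SplitSeparable.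
Variables (F : fieldType) (f : {poly F}) (rs : seq F).
Hypotheses (f_rs : f %= \prod_(z <- rs) ('X - z%:P)) (rs_uniq : uniq rs).

Lemma root_split w : root f w = (w \in rs).
Proof. by rewrite (eqp_root f_rs) root_prod_XsubC. Qed.

Lemma dvdp_splitP g : reflect {in rs, forall w, g.[w] = 0} (f %| g).
Proof.
rewrite (eqp_dvdl _ f_rs); apply: (iffP idP) => [/dvdpP[h ->] w w_rs|g_rs].
  have /eqP Pw : root (\prod_(z <- rs) ('X - z%:P)) w by rewrite root_prod_XsubC.
  by rewrite hornerM Pw mulr0.
by apply: uniq_roots_dvdp; rewrite ?uniq_rootsE //; apply/allP => w /g_rs/eqP.
Qed.

Lemma dvdp_sub_splitP g h : reflect {in rs, forall w, g.[w] = h.[w]} (f %| g - h).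
Proof.
apply: (iffP (dvdp_splitP _)) => gh w w_rs.
  by apply/eqP; rewrite -subr_eq0 -hornerN -hornerD gh.
by rewrite hornerD hornerN gh ?subrr.
Qed.

Lemma horner_modp_split e w : w \in rs -> (e %% f).[w] = e.[w].
Proof.
rewrite -root_split => /eqP fw.
by rewrite {2}(divp_eq e f) hornerD hornerM fw mulr0 add0r.
Qed.

Lemma rmorph_split_root (s : {rmorphism F -> F}) w :
  map_poly s f = f -> w \in rs -> s w \in rs.
Proof.
rewrite -!root_split => sf /eqP fw.
by rewrite /root -sf horner_map fw rmorph0.
Qed.

End SplitSeparable.

Lemma exists_avoid_point_preimage (T : eqType) (g : T -> T) (rs : seq T) u :
  injective g -> uniq rs -> (3 <= size rs)%N ->
  exists2 i, i \in rs & (i != u) && (g i != u).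
Proof.
move=> g_inj rs_uniq rs3; apply/hasP.
pose a1 := pred1 u; pose a2 := [pred i | g i == u].
have c1 : (count a1 rs <= 1)%N by rewrite count_uniq_mem ?leq_b1.
have c2 : (count a2 rs <= 1)%N.
  by rewrite -(count_map g (pred1 u)) count_uniq_mem ?map_inj_uniq ?leq_b1.
rewrite has_count (@eq_count _ _ (predC (predU a1 a2))) => [|i]; last first.
  by rewrite /= negb_or.
have := count_predUI a1 a2 rs; have := count_predC (predU a1 a2) rs.
lia.
Qed.

Section LineTransport.
Variable L : closedFieldType.
Implicit Types (fL eps q : {poly L}) (s : {rmorphism L -> L}).

Lemma line_of_map s fL eps q : bijective s ->
  line_of (map_poly s fL) (map_poly s eps) (map_poly s q) <-> line_of fL eps q.
Proof.
case=> g sK gK; rewrite /line_of !size_map_poly.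
have mapE a b : map_poly s (a *: 'X + b%:P) = s a *: 'X + (s b)%:P.
  by rewrite rmorphD /= map_polyZ map_polyX map_polyC.
split=> -[q_lt [a [b fab]]]; split=> //.
  by exists (g a), (g b); rewrite -(dvdp_map s) rmorphB rmorphM /= mapE !gK.
by exists (s a), (s b); rewrite -mapE -rmorphM -rmorphB dvdp_map.
Qed.

Lemma line_of_eqmod fL eps eps' q : fL %| eps - eps' ->
  line_of fL eps q <-> line_of fL eps' q.
Proof.
move=> f_eps; rewrite /line_of; split=> -[q_lt [a [b fab]]]; split=> //.
  exists a, b; have -> : eps' * q - (a *: 'X + b%:P) =
    (eps * q - (a *: 'X + b%:P)) - (eps - eps') * q by ring.
  by rewrite dvdp_sub // dvdp_mulr.
exists a, b; have -> : eps * q - (a *: 'X + b%:P) =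
  (eps' * q - (a *: 'X + b%:P)) + (eps - eps') * q by ring.
by rewrite dvdp_add // dvdp_mulr.
Qed.

Lemma line_of_scale fL eps c q : c != 0 ->
  line_of fL (c *: eps) q <-> line_of fL eps q.
Proof.
move=> c0; rewrite /line_of; split=> -[q_lt [a [b fab]]]; split=> //.
  exists (c^-1 * a), (c^-1 * b); rewrite -(dvdpZr _ _ c0).
  by rewrite scalerBr scalerAl scalerDr scale_polyC !scalerA !mulVKf.
exists (c * a), (c * b).
have -> : c *: eps * q - ((c * a) *: 'X + (c * b)%:P) =
    c *: (eps * q - (a *: 'X + b%:P)).
  by rewrite scalerBr scalerAl scalerDr scale_polyC scalerA.
by rewrite dvdpZr.
Qed.

Lemma fixes_line_eqmod s fL eps c : bijective s -> map_poly s fL = fL ->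
  c != 0 -> fL %| map_poly s eps - c *: eps -> fixes_line s (line_of fL eps).
Proof.
move=> s_bij sf c0 f_seps q.
have seps q' : line_of fL (map_poly s eps) q' <-> line_of fL eps q'.
  exact: iff_trans (line_of_eqmod q' f_seps) (line_of_scale fL eps q' c0).
have := line_of_map fL eps q s_bij; rewrite sf => sq.
exact: iff_trans (iff_sym sq) (seps _).
Qed.

End LineTransport.

Section LineSigns.
Variables (L : closedFieldType) (fL : {poly L}) (rs : seq L).
Hypotheses (f_rs : fL %= \prod_(z <- rs) ('X - z%:P)) (rs_uniq : uniq rs)
  (rs3 : (3 <= size rs)%N).

Local Notation dvdp_rootsP := (dvdp_sub_splitP f_rs rs_uniq).

Lemma exists_inverse_mod eps : {in rs, forall w, eps.[w] != 0} ->
  exists2 q, line_of fL eps q & fL %| eps * q - 1.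
Proof.
move=> eps0; have [e eE] := exists_interpolant (fun w => eps.[w]^-1) rs_uniq.
have f_inv : fL %| eps * (e %% fL) - 1.
  apply/dvdp_rootsP => w w_rs.
  by rewrite hornerM (horner_modp_split f_rs) // eE // divff ?eps0 // hornerC.
exists (e %% fL) => //; split.
  by rewrite ltn_modp -size_poly_gt0 (eqp_size f_rs) size_prod_XsubC.
by exists 0, 1; rewrite scale0r add0r.
Qed.

Lemma line_inverse_sign eps eps' q : fL %| eps * eps - eps' * eps' ->
  fL %| eps' * q - 1 -> line_of fL eps q ->
  exists2 c, c ^+ 2 = 1 & fL %| eps' - c *: eps.
Proof.
move=> /dvdp_rootsP eps_sq /dvdp_rootsP eps'q [_ [a [b /dvdp_rootsP epsq]]].
have {}eps_sq w : w \in rs -> eps.[w] ^+ 2 = eps'.[w] ^+ 2.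
  by move=> w_rs; rewrite !expr2 -!hornerM eps_sq.
have {}eps'q w : w \in rs -> eps'.[w] * q.[w] = 1.
  by move=> w_rs; rewrite -hornerM eps'q // hornerC.
have {}epsq w : w \in rs -> eps.[w] * q.[w] = a * w + b.
  by move=> w_rs; rewrite -hornerM epsq // hornerD hornerZ hornerX hornerC.
have ab1 w : w \in rs -> (a * w + b) ^+ 2 = 1.
  by move=> w_rs; rewrite -epsq // exprMn eps_sq // -exprMn eps'q // expr1n.
have a0 := affine_sqr_eq1 rs_uniq rs3 ab1.
have b1 : b ^+ 2 = 1.
  have := ab1 _ (mem_nth 0 (leq_trans (isT : 0 < 3)%N rs3)).
  by rewrite a0 mul0r add0r.
exists b => //; apply/dvdp_rootsP => w w_rs; rewrite hornerZ.
have q0 : q.[w] != 0.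
  by apply: contra_eq_neq (eps'q w w_rs) => ->; rewrite mulr0 eq_sym oner_neq0.
apply: (mulIf q0); rewrite eps'q // -mulrA epsq // a0 mul0r add0r.
by rewrite -expr2 b1.
Qed.

Lemma fixes_line_sign (s : {rmorphism L -> L}) dL eps :
  map_poly s fL = fL -> map_poly s dL = dL -> {in rs, forall w, dL.[w] != 0} ->
  fL %| eps * eps - dL -> fixes_line s (line_of fL eps) ->
  exists2 c, c ^+ 2 = 1 & fL %| map_poly s eps - c *: eps.
Proof.
move=> sf sd dL0 eps_sqr s_fix.
have eps0 w : w \in rs -> eps.[w] != 0.
  move=> w_rs; apply: contra_neq (dL0 w w_rs) => epsw.
  by rewrite -(dvdp_rootsP _ _ eps_sqr) // hornerM epsw mul0r.
have [q q_line f_inv] := exists_inverse_mod eps0.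
have f_map g : fL %| g -> fL %| map_poly s g by rewrite -[in X in _ -> X]sf dvdp_map.
apply: (line_inverse_sign (q := map_poly s q)); last exact/(s_fix q).
  have -> : eps * eps - map_poly s eps * map_poly s eps =
    (eps * eps - dL) - map_poly s (eps * eps - dL).
    by rewrite rmorphB rmorphM /= sd; ring.
  by rewrite dvdp_sub // f_map.
by have := f_map _ f_inv; rewrite rmorphB rmorphM rmorph1.
Qed.

Lemma dvdp_sign_horner (s : {rmorphism L -> L}) eps c :
  map_poly s fL = fL -> fL %| map_poly s eps - c *: eps ->
  {in rs, forall w, s eps.[w] = c * eps.[s w]}.
Proof.
move=> sf /dvdp_rootsP seps w w_rs.
by rewrite -horner_map seps ?hornerZ // (rmorph_split_root f_rs).
Qed.

End LineSigns.

Lemma map_poly_rmorph_fixed (F : fieldType) (L : fieldType)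
    (iota : {rmorphism F -> L}) (s : {rmorphism L -> L}) (p : {poly F}) :
  (forall a, s (iota a) = iota a) -> map_poly s (map_poly iota p) = map_poly iota p.
Proof. by move=> s_iota; rewrite -map_poly_comp; apply: eq_map_poly => a /=. Qed.

Section SquareRootLines.
Variables (k : fieldType) (L : closedFieldType) (iota : {rmorphism k -> L}).
Hypothesis L_alg :
  forall x : L, exists2 p : {poly k}, p != 0 & root (map_poly iota p) x.
Variables (f delta : {poly k}) (rs : seq L) (sq : L -> L).
Local Notation fL := (map_poly iota f).
Local Notation dL := (map_poly iota delta).
Hypotheses (f_rs : fL %= \prod_(z <- rs) ('X - z%:P)) (rs_uniq : uniq rs)
  (rs3 : (3 <= size rs)%N) (two_neq0 : 2 != 0 :> L)
  (dL_neq0 : {in rs, forall w, dL.[w] != 0})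
  (sq_spec : {in rs, forall w, sq w ^+ 2 = dL.[w]}).

Lemma sq_neq0 : {in rs, forall w, sq w != 0}.
Proof.
move=> w w_rs; apply: contra_neq (dL_neq0 w_rs) => sq0.
by rewrite -sq_spec // sq0 expr0n.
Qed.

Lemma sqrt_mod_horner eps : fL %| eps * eps - dL ->
  {in rs, forall w, eps.[w] ^+ 2 = sq w ^+ 2}.
Proof.
move=> /(dvdp_sub_splitP f_rs rs_uniq) eps_sq w w_rs.
by rewrite sq_spec // expr2 -hornerM eps_sq.
Qed.

Lemma exists_sqrt_mod (v : L -> L) : {in rs, forall w, v w ^+ 2 = dL.[w]} ->
  exists2 eps, fL %| eps * eps - dL & {in rs, forall w, eps.[w] = v w}.
Proof.
move=> v_sq; have [eps epsE] := exists_interpolant v rs_uniq.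
exists eps => //; apply/(dvdp_sub_splitP f_rs rs_uniq) => w w_rs.
by rewrite hornerM epsE // -expr2 v_sq.
Qed.

Definition sqrt_generators x := root fL x \/ exists w psi,
  [/\ root fL w, root fL psi & x = sq w * sq psi].

Lemma generators_fix_lines (s : {rmorphism L -> L}) :
  bijective s -> (forall a, s (iota a) = iota a) ->
  (forall x, sqrt_generators x -> s x = x) ->
  forall eps, fL %| eps * eps - dL -> fixes_line s (line_of fL eps).
Proof.
move=> s_bij s_k s_gen eps eps_sqr.
have s_rs w : w \in rs -> s w = w.
  by move=> w_rs; apply: s_gen; left; rewrite (root_split f_rs).
set w0 := nth 0 rs 0; have w0_rs : w0 \in rs by rewrite mem_nth // (leq_trans _ rs3).
set e0 := eps.[w0]; have e0_neq0 : e0 != 0.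
  have := expf_neq0 2 (sq_neq0 w0_rs).
  by rewrite -(sqrt_mod_horner eps_sqr) // expf_eq0.
have se0_neq0 : s e0 != 0 by rewrite fmorph_eq0.
have s_epse0 w : w \in rs -> s (eps.[w] * e0) = eps.[w] * e0.
  move=> w_rs; have : (eps.[w] * e0) ^+ 2 == (sq w * sq w0) ^+ 2.
    by rewrite !exprMn !(sqrt_mod_horner eps_sqr).
  have s_sq : s (sq w * sq w0) = sq w * sq w0.
    by apply: s_gen; right; exists w, w0; rewrite !(root_split f_rs).
  by rewrite eqf_sqr => /orP[]/eqP ->; rewrite ?rmorphN s_sq.
apply: (fixes_line_eqmod (c := e0 / s e0)) => //.
- by rewrite map_poly_rmorph_fixed.
- by rewrite mulf_neq0 ?invr_eq0.
apply/(dvdp_sub_splitP f_rs rs_uniq) => w w_rs.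
rewrite hornerZ -{1}(s_rs w w_rs) horner_map; apply: (mulIf se0_neq0).
by rewrite -rmorphM s_epse0 //; field.
Qed.

Local Notation fixes_all_lines s :=
  (forall eps, fL %| eps * eps - dL -> fixes_line s (line_of fL eps)).

Lemma lines_fixed_sign (s : {rmorphism L -> L}) :
  (forall a, s (iota a) = iota a) -> fixes_all_lines s ->
  forall eps, fL %| eps * eps - dL ->
  exists2 c, c ^+ 2 = 1 & {in rs, forall w, s eps.[w] = c * eps.[s w]}.
Proof.
move=> s_k s_lines eps eps_sqr.
have sf := map_poly_rmorph_fixed f s_k.
have [c c_sq f_seps] := fixes_line_sign f_rs rs_uniq rs3 sf
  (map_poly_rmorph_fixed delta s_k) dL_neq0 eps_sqr (s_lines eps eps_sqr).
by exists c => //; apply: (dvdp_sign_horner f_rs rs_uniq sf f_seps).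
Qed.

Lemma neq0_oppr_neq (x : L) : x != 0 -> x != - x.
Proof.
apply: contra_neq => x_opp; apply/eqP.
have : x * 2 == 0 by rewrite mulrDr mulr1 {1}x_opp addNr.
by rewrite mulf_eq0 (negbTE two_neq0) orbF.
Qed.

Lemma lines_fixed_roots (s : {rmorphism L -> L}) :
  (forall a, s (iota a) = iota a) -> fixes_all_lines s -> {in rs, forall u, s u = u}.
Proof.
(* If s u != u, flip the sign of a square root eps1 at u to get eps2.  The
   sign characters satisfy c2 = -c1 at u, but c2 = c1 at any root i with
   i != u and s i != u. *)
move=> s_k s_lines u u_rs; apply/eqP/contraT => su_u.
have s_rs := rmorph_split_root f_rs (map_poly_rmorph_fixed f s_k).
have [eps1 eps1_sqr eps1E] := exists_sqrt_mod sq_spec.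
have [|eps2 eps2_sqr eps2E] :=
  @exists_sqrt_mod (fun w => if w == u then - sq w else sq w).
  by move=> w w_rs; case: ifP; rewrite ?sqrrN sq_spec.
have [c1 c1_sq s_eps1] := lines_fixed_sign s_k s_lines eps1_sqr.
have [c2 _ s_eps2] := lines_fixed_sign s_k s_lines eps2_sqr.
have c21 : c2 = - c1.
  have := s_eps2 u u_rs; rewrite !eps2E ?s_rs // eqxx (negbTE su_u).
  rewrite rmorphN -eps1E // s_eps1 // eps1E ?s_rs // -mulNr.
  by move/(mulIf (sq_neq0 (s_rs u u_rs))).
have [i i_rs /andP[iu siu]] :=
  exists_avoid_point_preimage u (fmorph_inj s) rs_uniq rs3.
have := s_eps2 i i_rs; rewrite !eps2E ?s_rs // (negbTE iu) (negbTE siu).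
rewrite -eps1E // s_eps1 // eps1E ?s_rs // => /(mulIf (sq_neq0 (s_rs i i_rs))).
have c1_neq0 : c1 != 0.
  by apply: contra_eq_neq c1_sq => ->; rewrite expr0n eq_sym oner_neq0.
by rewrite c21 => c1_opp; move: (neq0_oppr_neq c1_neq0); rewrite -c1_opp eqxx.
Qed.

Lemma lines_fixed_products (s : {rmorphism L -> L}) :
  (forall a, s (iota a) = iota a) -> fixes_all_lines s ->
  {in rs &, forall w psi, s (sq w * sq psi) = sq w * sq psi}.
Proof.
move=> s_k s_lines w psi w_rs psi_rs.
have s_rs := lines_fixed_roots s_k s_lines.
have [eps eps_sqr epsE] := exists_sqrt_mod sq_spec.
have [c c_sq s_eps] := lines_fixed_sign s_k s_lines eps_sqr.
by rewrite rmorphM -!epsE // !s_eps // !s_rs // mulrACA -expr2 c_sq mul1r.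
Qed.

Lemma lines_fixed_over_aut K (s : {rmorphism L -> L}) : over_k iota K ->
  lines_fixed_over iota f delta K -> bijective s -> (forall y, K y -> s y = y) ->
  (forall a, s (iota a) = iota a) /\ fixes_all_lines s.
Proof.
move=> [_ K_iota] K_lines s_bij s_K.
by split=> [a|]; [apply/s_K/K_iota | exact: K_lines].
Qed.

Lemma lines_fixed_over_roots K : over_k iota K ->
  lines_fixed_over iota f delta K -> {in rs, forall w, K w}.
Proof.
move=> K_k K_lines w w_rs; apply: (aut_fixed_mem L_alg (q := fL) K_k).
- by rewrite -size_poly_eq0 (eqp_size f_rs) size_prod_XsubC.
- by move=> i; rewrite coef_map; apply: K_k.2.
- by rewrite (eqp_separable f_rs) separable_prod_XsubC.
- by rewrite (root_split f_rs).
- move=> s s_bij s_K; have [s_k s_lines] := lines_fixed_over_aut K_k K_lines s_bij s_K.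
  exact: (lines_fixed_roots s_k s_lines w_rs).
Qed.

Lemma lines_fixed_over_products K : over_k iota K ->
  lines_fixed_over iota f delta K -> {in rs &, forall w psi, K (sq w * sq psi)}.
Proof.
move=> K_k K_lines w psi w_rs psi_rs; have [K_sub K_iota] := K_k.
have K_rs := lines_fixed_over_roots K_k K_lines.
set r := sq w * sq psi; have r_neq0 : r != 0 by rewrite mulf_neq0 ?sq_neq0.
have r2_K : r ^+ 2 \in subfield_pred K_sub.
  have dL_K : dL \is a polyOver (subfield_pred K_sub).
    by apply/polyOverP => i; rewrite coef_map; apply/(subfield_predP K_sub)/K_iota.
  by rewrite exprMn !sq_spec // rpredM // rpred_horner //;
    apply/(subfield_predP K_sub)/K_rs.
apply: (aut_fixed_mem L_alg (q := \prod_(z <- [:: r; - r]) ('X - z%:P)) K_k).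
- by rewrite monic_neq0 // monic_prod_XsubC.
- have -> : \prod_(z <- [:: r; - r]) ('X - z%:P) = 'X^2 - (r ^+ 2)%:P.
    by rewrite big_cons big_seq1 polyCN rmorphXn; ring.
  move=> i; apply/(subfield_predP K_sub); rewrite coefB coefXn coefC.
  by rewrite rpredB ?rpred_nat //; case: eqP; rewrite ?rpred0.
- by rewrite separable_prod_XsubC /= inE andbT neq0_oppr_neq.
- by rewrite root_prod_XsubC mem_head.
- move=> s s_bij s_K; have [s_k s_lines] := lines_fixed_over_aut K_k K_lines s_bij s_K.
  exact: (lines_fixed_products s_k s_lines w_rs psi_rs).
Qed.

Lemma lines_fixed_over_generators K : over_k iota K ->
  lines_fixed_over iota f delta K -> forall x, sqrt_generators x -> K x.
Proof.
move=> K_k K_lines x [|[w [psi [w_root psi_root ->]]]].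
  by rewrite (root_split f_rs); apply: lines_fixed_over_roots.
by apply: lines_fixed_over_products; rewrite -?(root_split f_rs).
Qed.

End SquareRootLines.

Theorem lemma2p36 (k : fieldType) (L : closedFieldType)
  (iota : {rmorphism k -> L})
  (L_alg : forall x : L, exists2 p : {poly k}, p != 0 & root (map_poly iota p) x)
  (char_k : ~~ (2%N \in [pchar k]))
  (f : {poly k}) (f_sep : separable_poly f) (f_deg : size f = 7%N)
  (delta : {poly k}) (delta_unit : coprimep delta f)
  (sq : L -> L)
  (sq_spec : forall w, root (map_poly iota f) w ->
                 sq w ^+ 2 = (map_poly iota delta).[w]) :
  let m := gen_field iota (fun x => root (map_poly iota f) x \/
             exists w psi, [/\ root (map_poly iota f) w, root (map_poly iota f) psi
                             & x = sq w * sq psi]) in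
  lines_fixed_over iota f delta m /\
  (forall K, over_k iota K -> lines_fixed_over iota f delta K -> forall x, m x -> K x).
Proof.
move=> m; set fL := map_poly iota f.
have fL_neq0 : fL != 0 by rewrite map_poly_eq0 -size_poly_eq0 f_deg.
have [rs fL_rs] := closed_field_poly_normal fL.
have f_rs : fL %= \prod_(z <- rs) ('X - z%:P).
  by rewrite {1}fL_rs eqp_scale // lead_coef_eq0.
have rs_uniq : uniq rs.
  by rewrite -separable_prod_XsubC -(eqp_separable f_rs) separable_map.
have rs3 : (3 <= size rs)%N.
  by move: (eqp_size f_rs); rewrite size_map_poly f_deg size_prod_XsubC => -[<-].
have two_neq0 : 2 != 0 :> L.
  by rewrite -(rmorph_nat iota) fmorph_eq0; move: char_k; rewrite inE /=.
have dL_neq0 : {in rs, forall w, (map_poly iota delta).[w] != 0}.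
  move=> w; rewrite -(root_split f_rs); apply: coprimep_root.
  by rewrite coprimep_map coprimep_sym.
have sq_rs : {in rs, forall w, sq w ^+ 2 = (map_poly iota delta).[w]}.
  by move=> w; rewrite -(root_split f_rs); apply: sq_spec.
split=> [s s_bij s_m|K K_k K_lines x mx]; last first.
  apply: mx => //.
  exact: (lines_fixed_over_generators L_alg f_rs rs_uniq rs3 two_neq0 dL_neq0
    sq_rs K_k K_lines).
apply: (generators_fix_lines f_rs rs_uniq rs3 dL_neq0 sq_rs) => // [a|x gx].
  by apply: s_m => K [].
by apply: s_m => K _; apply.
Qed.
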